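(* Let $\tilde{\mathcal L}^{\tau,\sigma_1}$ be the real Lie algebra of formal Laurent series $\xi(\lambda)=\sum_{j\le n_0}\xi_j\lambda^j$ (for some integer $n_0$ depending on $\xi$) such that $\xi_j\in\mathfrak k_1$ for $j$ even and $\xi_j\in\mathfrak p_1$ for $j$ odd, with bracket $[\sum_i\xi_i\lambda^i,\sum_j\eta_j\lambda^j]=\sum_k\big(\sum_{i+j=k}[\xi_i,\eta_j]\big)\lambda^k$. Define $$\tilde{\mathcal L}^{\tau,\sigma_1}_+=\Big\{\xi\in\tilde{\mathcal L}^{\tau,\sigma_1}:\ \xi_{-j}=\sigma_2(\xi_j)\ \text{for all } j,\ \ \xi(1):=\textstyle\sum_j\xi_j\in\mathfrak k_2'\Big\},$$ $$\tilde{\mathcal L}^{\tau,\sigma_1}_-=\Big\{\xi\in\tilde{\mathcal L}^{\tau,\sigma_1}:\ \xi_j=0\ \text{for } j>0,\ \xi_0\in\mathfrak k_1'\Big\}.$$ (Elements of $\tilde{\mathcal L}^{\tau,\sigma_1}_+$ are Laurent polynomials, so $\xi(1)$ is a finite sum.) Then $\tilde{\mathcal L}^{\tau,\sigma_1}_+$ and $\tilde{\mathcal L}^{\tau,\sigma_1}_-$ are Lie subalgebras of $\tilde{\mathcal L}^{\tau,\sigma_1}$ and $\tilde{\mathcal L}^{\tau,\sigma_1}=\tilde{\mathcal L}^{\tau,\sigma_1}_+\oplus\tilde{\mathcal L}^{\tau,\sigma_1}_-$ as a direct sum of vector spaces; i.e., every $A\in\tilde{\mathcal L}^{\tau,\sigma_1}$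 can be written uniquely as $A=\xi+\eta$ with $\xi\in\tilde{\mathcal L}^{\tau,\sigma_1}_+$, $\eta\in\tilde{\mathcal L}^{\tau,\sigma_1}_-$.
   Context: Let $\mathfrak g$ be a complex simple Lie algebra, $\tau$ a conjugate-linear involution of $\mathfrak g$, and $\sigma_1,\sigma_2$ complex-linear involutions of $\mathfrak g$, the three involutions pairwise commuting. Let $\mathfrak u=\{x\in\mathfrak g:\tau(x)=x\}$. For $i=1,2$ let $\mathfrak k_i=\{x\in\mathfrak u:\sigma_i(x)=x\}$ and $\mathfrak p_i=\{x\in\mathfrak u:\sigma_i(x)=-x\}$, so $\mathfrak u=\mathfrak k_i\oplus\mathfrak p_i$. Put $\mathfrak q_1=\mathfrak k_1\cap\mathfrak p_2$ and $\mathfrak q_2=\mathfrak k_2\cap\mathfrak p_1$. Assume: $\mathfrak k_1\cap\mathfrak k_2=\mathfrak s_1\oplus\mathfrak s_2$ for ideals $\mathfrak s_1,\mathfrak s_2$ of $\mathfrak k_1\cap\mathfrak k_2$; the subspaces $\mathfrak k_1':=\mathfrak s_2\oplus\mathfrak q_1$ and $\mathfrak k_2':=\mathfrak s_1\oplus\mathfrak q_2$ are Lie subalgebras; and $\mathfrak k_1=\mathfrak s_1\oplus\mathfrak k_1'$, $\mathfrak k_2=\mathfrak k_2'\oplus\mathfrak s_2$ as direct sums of Lie algebras (these are the Lie algebra versions of $K_1\cap K_2=S_1\times S_2$, $K_1=S_1\times K_1'$, $K_2=K_2'\times S_2$). *)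

From HB Require Import structures.
From mathcomp Require Import all_boot all_order all_algebra.
Set Implicit Arguments. Unset Strict Implicit. Unset Printing Implicit Defensive.
Import Order.TTheory GRing.Theory Num.Theory.
Local Open Scope ring_scope.

Definition nat_of_int (z : int) : nat :=
  match z with Posz n => n | Negz _ => 0%N end.

Section Defs.
Variables (C : numClosedFieldType) (V : vectType C).

Definition is_lie_bracket (br : V -> V -> V) : Prop :=
  [/\ (forall (a : C) x y z, br (a *: x + y) z = a *: br x z + br y z),
      (forall (a : C) x y z, br z (a *: x + y) = a *: br z x + br z y),
      (forall x, br x x = 0) &
      (forall x y z, br x (br y z) + br y (br z x) + br z (br x y) = 0)].

Definition is_simple_lie (br : V -> V -> V) : Prop :=
  (exists x y, br x y != 0) /\
  (forall I : {vspace V}, (forall x y, y \in I -> br x y \in I) ->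
     I = 0%VS \/ I = fullv).

Definition conj_lin_involution (br : V -> V -> V) (t : V -> V) : Prop :=
  [/\ (forall (a : C) x y, t (a *: x + y) = a^* *: t x + t y),
      (forall x y, t (br x y) = br (t x) (t y)) &
      (forall x, t (t x) = x)].

Definition lin_involution (br : V -> V -> V) (s : V -> V) : Prop :=
  [/\ (forall (a : C) x y, s (a *: x + y) = a *: s x + s y),
      (forall x y, s (br x y) = br (s x) (s y)) &
      (forall x, s (s x) = x)].

Definition real_subspace (S : V -> Prop) : Prop :=
  [/\ S 0, (forall x y, S x -> S y -> S (x + y)) &
      (forall (a : C) x, a \is Num.real -> S x -> S (a *: x))].

Variables (br : V -> V -> V) (tau sig1 sig2 : V -> V) (s1 s2 : V -> Prop).

Definition uu (x : V) : Prop := tau x = x.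
Definition kk1 (x : V) : Prop := uu x /\ sig1 x = x.
Definition pp1 (x : V) : Prop := uu x /\ sig1 x = - x.
Definition kk2 (x : V) : Prop := uu x /\ sig2 x = x.
Definition pp2 (x : V) : Prop := uu x /\ sig2 x = - x.
Definition qq1 (x : V) : Prop := kk1 x /\ pp2 x.
Definition qq2 (x : V) : Prop := kk2 x /\ pp1 x.
Definition kk1' (x : V) : Prop := exists a b, s2 a /\ qq1 b /\ x = a + b.
Definition kk2' (x : V) : Prop := exists a b, s1 a /\ qq2 b /\ x = a + b.

(* formal Laurent series sum_{j <= n0} xi_j lambda^j, as coefficient maps *)
Definition vanish_above (n : int) (xi : int -> V) : Prop :=
  forall j, n < j -> xi j = 0.

Definition Ltilde (xi : int -> V) : Prop :=
  (exists n0 : int, vanish_above n0 xi) /\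
  (forall j, if odd (absz j) then pp1 (xi j) else kk1 (xi j)).

(* bracket of Laurent series: for xi vanishing above n and eta vanishing above
   m, coefficient k is sum_{i+j=k} [xi_i, eta_j], i.e. the (finite) sum over
   i = n, n-1, ..., k-m (all other terms vanish). *)
Definition lbr (n m : int) (xi eta : int -> V) : int -> V :=
  fun k => \sum_(t < nat_of_int (n + m - k + 1))
             br (xi (n - t%:Z)) (eta (k - n + t%:Z)).

(* xi(1) = sum_{j=-n}^{n} xi_j, for a Laurent polynomial vanishing outside [-n,n] *)
Definition eval1 (n : nat) (xi : int -> V) : V :=
  \sum_(t < (n.*2).+1) xi (n%:Z - t%:Z).

Definition Lplus (xi : int -> V) : Prop :=
  [/\ Ltilde xi,
      (forall j, xi (- j) = sig2 (xi j)) &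
      (exists n : nat, vanish_above n%:Z xi /\ kk2' (eval1 n xi))].

Definition Lminus (xi : int -> V) : Prop :=
  [/\ Ltilde xi, (forall j, 0 < j -> xi j = 0) & kk1' (xi 0)].

Definition loop_subalgebra (P : (int -> V) -> Prop) : Prop :=
  [/\ (forall xi, P xi -> Ltilde xi),
      P (fun _ => 0),
      (forall xi eta, P xi -> P eta -> P (fun j => xi j + eta j)),
      (forall (a : C) xi, a \is Num.real -> P xi -> P (fun j => a *: xi j)) &
      (forall xi eta n m, P xi -> P eta -> vanish_above n xi ->
         vanish_above m eta -> P (lbr n m xi eta))].

End Defs.

From Pilot Require Import Defs.
From HB Require Import structures.
From mathcomp Require Import all_boot all_order all_algebra.
Set Implicit Arguments. Unset Strict Implicit. Unset Printing Implicit Defensive.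
Import Order.TTheory GRing.Theory Num.Theory.
Local Open Scope ring_scope.

(* The coefficients of A in positive degree must go to xi, and the symmetry
   xi_{-j} = sig2 xi_j then fixes the negative ones of xi; the rest goes to
   eta.  Only xi_0 is free.  The value c at 1 of the symmetric part built so
   far is sig2-fixed, so c = c' + c2 in k2 = k2' + s2, while
   A_0 = a1 + b1 in k1 = s1 + k1'.  Then xi_0 := a1 - c2 lies in k1 /\ k2,
   xi(1) = c' + a1 lies in k2' and eta_0 = b1 + c2 lies in k1'.
   An element of both halves is concentrated in degree 0, where it lies in
   k1 /\ k2 /\ k1' /\ k2' = 0 because s1 /\ k1' = k2' /\ s2 = 0.
   Closure of the plus part under brackets holds because evaluation at
   lambda = 1 is a Lie homomorphism on Laurent polynomials. *)

Lemma odd_absz_add (a b : int) : odd (absz (a + b)) = odd (absz a) (+) odd (absz b).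
Proof.
have oddS (z : int) : odd (absz (z + 1)) = ~~ odd (absz z).
  by case: z => [n|[|n]] //=; rewrite ?addn1 ?subn1 /= ?negbK.
elim/int_rect: b => [|n IH|n IH]; first by rewrite addr0 addbF.
- by rewrite -addn1 PoszD addrA oddS IH /= addn1 /= addbN.
- have oddP (z : int) : odd (absz (z - 1)) = ~~ odd (absz z).
    by rewrite -[in RHS](subrK 1 z) oddS negbK.
  rewrite -addn1 PoszD opprD addrA oddP IH abszN -opprD abszN -PoszD /= addn1.
  by rewrite /= addbN.
Qed.

Lemma nat_of_intK (z : int) : 0 <= z -> (nat_of_int z)%:Z = z.
Proof. by case: z. Qed.

Lemma nat_of_int_le0 (z : int) : z <= 0 -> nat_of_int z = 0%N.
Proof. by case: z => [[|p]|p]. Qed.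

Lemma nat_of_int_ge (z : int) : z <= (nat_of_int z)%:Z.
Proof. by case: z. Qed.

Lemma eq_big_support (V : zmodType) (I : eqType) (F : I -> V) (s s' : seq I) :
  uniq s -> uniq s' ->
  (forall i, F i != 0 -> i \in s) -> (forall i, F i != 0 -> i \in s') ->
  \sum_(i <- s) F i = \sum_(i <- s') F i.
Proof.
have sum_nz r : \sum_(i <- r) F i = \sum_(i <- [seq i <- r | F i != 0]) F i.
  by rewrite big_filter [RHS]big_mkcond; apply: eq_bigr => i _; case: eqP.
move=> us us' hs hs'; rewrite sum_nz [RHS]sum_nz; apply: perm_big.
apply: uniq_perm; rewrite ?filter_uniq // => i; rewrite !mem_filter.
by case: (boolP (F i != 0)) => //= /[dup] /hs -> /hs' ->.
Qed.

Definition down_seq (n : int) (L : nat) : seq int := [seq n - t%:Z | t <- iota 0 L].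

Definition window (N : nat) : seq int := down_seq N%:Z (N.*2).+1.

Lemma mem_down_seq n L j : (j \in down_seq n L) = (j <= n) && (n - j < L%:Z).
Proof.
apply/mapP/andP => [[t]|[jn nj]].
- rewrite mem_iota add0n => /andP[_ tL] ->; split; first by rewrite lerBlDr lerDl.
  by rewrite opprB addrC subrK ltz_nat.
- exists (absz (n - j)); last by rewrite gez0_abs ?subr_ge0 // opprB addrC subrK.
  by rewrite mem_iota add0n /= -ltz_nat gez0_abs // subr_ge0.
Qed.

Lemma down_seq_uniq n L : uniq (down_seq n L).
Proof.
rewrite map_inj_uniq ?iota_uniq // => a b /= /eqP.
by rewrite (inj_eq (addrI _)) (inj_eq oppr_inj) => /eqP [].
Qed.

Lemma big_ord_down_seq (V : nmodType) n L (G : int -> V) :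
  \sum_(t < L) G (n - t%:Z) = \sum_(j <- down_seq n L) G j.
Proof. by rewrite big_map -(big_mkord xpredT (fun t => G (n - t%:Z))) /index_iota subn0. Qed.

Lemma mem_window N j : (j \in window N) = (- N%:Z <= j <= N%:Z).
Proof.
rewrite mem_down_seq andbC; congr (_ && _).
by rewrite -addn1 PoszD ltzD1 -addnn PoszD lerBlDl -lerBlDr opprD addrA subrr add0r.
Qed.

Lemma window_uniq N : uniq (window N).
Proof. exact: down_seq_uniq. Qed.

Lemma mem_window0 N : 0 \in window N.
Proof. by rewrite mem_window oppr_le0. Qed.

Lemma mem_windowN N j : (- j \in window N) = (j \in window N).
Proof. by rewrite !mem_window lerN2 lerNl andbC. Qed.

Lemma window_le p N j : (p <= N)%N -> j \in window p -> j \in window N.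
Proof.
rewrite -lez_nat !mem_window => pN /andP[pj jp].
by rewrite (le_trans _ pj) ?lerN2 // (le_trans jp).
Qed.

Lemma window_add N i j : i \in window N -> j \in window N -> i + j \in window (N + N).
Proof.
by rewrite !mem_window PoszD opprD => /andP[Ni iN] /andP[Nj jN]; rewrite !lerD.
Qed.

Lemma big_windowN (V : nmodType) N (F : int -> V) :
  \sum_(j <- window N) F (- j) = \sum_(j <- window N) F j.
Proof.
rewrite -(big_map -%R xpredT F); apply: perm_big; apply: uniq_perm.
- by rewrite map_inj_uniq ?window_uniq //; exact: oppr_inj.
- exact: window_uniq.
by move=> j; rewrite -[in LHS](opprK j) (mem_map oppr_inj) mem_windowN.
Qed.

Definition window_supported (V : zmodType) (N : nat) (xi : int -> V) : Prop :=
  forall i, xi i != 0 -> i \in window N.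

Lemma window_supported_le (V : zmodType) (xi : int -> V) (p N : nat) :
  (p <= N)%N -> window_supported p xi -> window_supported N xi.
Proof. by move=> pN supp i /supp; exact: window_le. Qed.

Lemma window_supportedD (V : zmodType) N (xi eta : int -> V) :
  window_supported N xi -> window_supported N eta ->
  window_supported N (fun j => xi j + eta j).
Proof.
move=> sxi seta i; have [xi0|/sxi //] := eqVneq (xi i) 0.
by rewrite xi0 add0r; exact: seta.
Qed.

Section RealSubspace.
Variables (C : numClosedFieldType) (V : vectType C).
Implicit Types (P Q : V -> Prop).

Lemma real_subspace0 P : real_subspace P -> P 0.
Proof. by case. Qed.

Lemma real_subspaceD P x y : real_subspace P -> P x -> P y -> P (x + y).
Proof. by case=> _ + _; apply. Qed.

Lemma real_subspaceZ P a x : real_subspace P -> a \is Num.real -> P x -> P (a *: x).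
Proof. by case=> _ _; apply. Qed.

Lemma real_subspaceB P x y : real_subspace P -> P x -> P y -> P (x - y).
Proof.
move=> hP px py; rewrite -scaleN1r; apply: real_subspaceD => //.
by apply: real_subspaceZ; rewrite ?realN ?real1.
Qed.

Lemma real_subspace_sum P (I : Type) (r : seq I) (Q : pred I) (F : I -> V) :
  real_subspace P -> (forall i, Q i -> P (F i)) -> P (\sum_(i <- r | Q i) F i).
Proof.
move=> hP hF; apply: big_ind => //; first exact: real_subspace0.
by move=> x y; apply: real_subspaceD.
Qed.

Lemma real_subspaceI P Q :
  real_subspace P -> real_subspace Q -> real_subspace (fun x => P x /\ Q x).
Proof.
move=> hP hQ; split; first by split; apply: real_subspace0.
- by move=> x y [? ?] [? ?]; split; apply: real_subspaceD.
- by move=> a x ra [? ?]; split; apply: real_subspaceZ.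
Qed.

Lemma real_subspace_add P Q : real_subspace P -> real_subspace Q ->
  real_subspace (fun x => exists a b, P a /\ Q b /\ x = a + b).
Proof.
move=> hP hQ; split.
- by exists 0, 0; rewrite addr0; do !split; apply: real_subspace0.
- move=> _ _ [a [b [pa [qb ->]]]] [a' [b' [pa' [qb' ->]]]].
  by exists (a + a'), (b + b'); rewrite addrACA; do !split; apply: real_subspaceD.
- move=> c _ rc [a [b [pa [qb ->]]]]; exists (c *: a), (c *: b).
  by rewrite scalerDr; do !split; apply: real_subspaceZ.
Qed.

Lemma real_subspace_eq (f g : V -> V) :
  {morph f : x y / x + y} -> {morph g : x y / x + y} ->
  (forall a x, a \is Num.real -> f (a *: x) = a *: f x) ->
  (forall a x, a \is Num.real -> g (a *: x) = a *: g x) ->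
  real_subspace (fun x => f x = g x).
Proof.
move=> fD gD fZ gZ; split.
- by have := fZ 0 0 (real0 _); have := gZ 0 0 (real0 _); rewrite !scale0r => -> ->.
- by move=> x y ex ey; rewrite fD gD ex ey.
- by move=> a x ra e; rewrite fZ // gZ // e.
Qed.

End RealSubspace.

Section TwistedLoopAlgebra.
Variables (C : numClosedFieldType) (V : vectType C).
Variables (br : V -> V -> V) (tau sig1 sig2 : V -> V) (s1 s2 : V -> Prop).
Hypothesis Hbr : is_lie_bracket br.
Hypothesis Htau : conj_lin_involution br tau.
Hypothesis Hsig1 : lin_involution br sig1.
Hypothesis Hsig2 : lin_involution br sig2.
Hypothesis Hc2 : forall x, tau (sig2 x) = sig2 (tau x).
Hypothesis Hc12 : forall x, sig1 (sig2 x) = sig2 (sig1 x).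
Hypotheses (Hs1sub : real_subspace s1) (Hs2sub : real_subspace s2).
Hypothesis Hs1in : forall x, s1 x -> kk1 tau sig1 x /\ kk2 tau sig2 x.
Hypothesis Hs2in : forall x, s2 x -> kk1 tau sig1 x /\ kk2 tau sig2 x.
Hypothesis Hk12span : forall x, kk1 tau sig1 x -> kk2 tau sig2 x ->
  exists a b, s1 a /\ s2 b /\ x = a + b.
Hypothesis Hk1'sub : forall x y, kk1' tau sig1 sig2 s2 x -> kk1' tau sig1 sig2 s2 y ->
  kk1' tau sig1 sig2 s2 (br x y).
Hypothesis Hk2'sub : forall x y, kk2' tau sig1 sig2 s1 x -> kk2' tau sig1 sig2 s1 y ->
  kk2' tau sig1 sig2 s1 (br x y).
Hypothesis Hk1span : forall x, kk1 tau sig1 x ->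
  exists a b, s1 a /\ kk1' tau sig1 sig2 s2 b /\ x = a + b.
Hypothesis Hk1dir : forall x, s1 x -> kk1' tau sig1 sig2 s2 x -> x = 0.
Hypothesis Hk2span : forall x, kk2 tau sig2 x ->
  exists a b, kk2' tau sig1 sig2 s1 a /\ s2 b /\ x = a + b.
Hypothesis Hk2dir : forall x, kk2' tau sig1 sig2 s1 x -> s2 x -> x = 0.

Local Notation uu := (uu tau).
Local Notation kk1 := (kk1 tau sig1).
Local Notation pp1 := (pp1 tau sig1).
Local Notation kk2 := (kk2 tau sig2).
Local Notation pp2 := (pp2 tau sig2).
Local Notation qq1 := (qq1 tau sig1 sig2).
Local Notation qq2 := (qq2 tau sig1 sig2).
Local Notation kk1' := (kk1' tau sig1 sig2 s2).
Local Notation kk2' := (kk2' tau sig1 sig2 s1).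
Local Notation Ltilde := (Ltilde tau sig1).
Local Notation Lplus := (Lplus tau sig1 sig2 s1).
Local Notation Lminus := (Lminus tau sig1 sig2 s2).
Local Notation lbr := (lbr br).

Lemma br_bilinear : bilinear_for *:%R *:%R br.
Proof. by case: Hbr => brl brr _ _; split=> z a x y; [exact: brl|exact: brr]. Qed.
HB.instance Definition _ := bilinear_isBilinear.Build C V V V *:%R *:%R br br_bilinear.

Lemma tau_semilinear : linear_for (Num.conj \; *:%R) tau.
Proof. by case: Htau. Qed.
HB.instance Definition _ := GRing.isLinear.Build C V V _ tau tau_semilinear.

Lemma sig1_linear : linear sig1. Proof. by case: Hsig1. Qed.
HB.instance Definition _ := GRing.isLinear.Build C V V *:%R sig1 sig1_linear.

Lemma sig2_linear : linear sig2. Proof. by case: Hsig2. Qed.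
HB.instance Definition _ := GRing.isLinear.Build C V V *:%R sig2 sig2_linear.

Lemma tau_br x y : tau (br x y) = br (tau x) (tau y). Proof. by case: Htau. Qed.
Lemma sig1_br x y : sig1 (br x y) = br (sig1 x) (sig1 y). Proof. by case: Hsig1. Qed.
Lemma sig2_br x y : sig2 (br x y) = br (sig2 x) (sig2 y). Proof. by case: Hsig2. Qed.
Lemma sig2K x : sig2 (sig2 x) = x. Proof. by case: Hsig2. Qed.

Lemma real_subspace_uu : real_subspace uu.
Proof.
apply: real_subspace_eq => // [x y|a x ra]; first exact: linearD.
by rewrite linearZ /= conj_Creal.
Qed.

Lemma real_subspace_sig (sig : {linear V -> V}) :
  real_subspace (fun x => uu x /\ sig x = x) /\
  real_subspace (fun x => uu x /\ sig x = - x).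
Proof.
have sigD : {morph sig : x y / x + y} := linearD sig.
have sigZ a x : a \is Num.real -> sig (a *: x) = a *: sig x by rewrite linearZ.
split; apply: real_subspaceI real_subspace_uu _; apply: real_subspace_eq => //.
- by move=> x y; rewrite opprD.
- by move=> a x _; rewrite scalerN.
Qed.

Lemma real_subspace_kk1 : real_subspace kk1. Proof. exact: (real_subspace_sig sig1).1. Qed.
Lemma real_subspace_pp1 : real_subspace pp1. Proof. exact: (real_subspace_sig sig1).2. Qed.
Lemma real_subspace_kk2 : real_subspace kk2. Proof. exact: (real_subspace_sig sig2).1. Qed.
Lemma real_subspace_pp2 : real_subspace pp2. Proof. exact: (real_subspace_sig sig2).2. Qed.

Lemma real_subspace_qq1 : real_subspace qq1.
Proof. exact: real_subspaceI real_subspace_kk1 real_subspace_pp2. Qed.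
Lemma real_subspace_qq2 : real_subspace qq2.
Proof. exact: real_subspaceI real_subspace_kk2 real_subspace_pp1. Qed.

Lemma real_subspace_kk1' : real_subspace kk1'.
Proof. exact: real_subspace_add Hs2sub real_subspace_qq1. Qed.
Lemma real_subspace_kk2' : real_subspace kk2'.
Proof. exact: real_subspace_add Hs1sub real_subspace_qq2. Qed.

Lemma s1_kk2' a : s1 a -> kk2' a.
Proof.
move=> sa; exists a, 0; rewrite addr0; split=> //; split=> //.
exact: real_subspace0 real_subspace_qq2.
Qed.
Lemma s2_kk1' a : s2 a -> kk1' a.
Proof.
move=> sa; exists a, 0; rewrite addr0; split=> //; split=> //.
exact: real_subspace0 real_subspace_qq1.
Qed.

Lemma k12_k12'_eq0 x : kk1 x -> kk2 x -> kk1' x -> kk2' x -> x = 0.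
Proof.
move=> k1x k2x k1'x k2'x; have [a [b [sa [sb xab]]]] := Hk12span k1x k2x.
have a0 : a = 0.
  apply: Hk1dir => //; rewrite -[a](addrK b) -xab.
  exact: real_subspaceB real_subspace_kk1' k1'x (s2_kk1' sb).
by rewrite xab a0 add0r; apply: Hk2dir; rewrite // -[b]add0r -a0 -xab.
Qed.

Definition grade1 (b : bool) (x : V) : Prop := if b then pp1 x else kk1 x.

Lemma real_subspace_grade1 b : real_subspace (grade1 b).
Proof. by case: b; [exact: real_subspace_pp1|exact: real_subspace_kk1]. Qed.

Lemma grade1_uu b x : grade1 b x -> uu x.
Proof. by case: b => -[]. Qed.

Lemma grade1_br b c x y : grade1 b x -> grade1 c y -> grade1 (b (+) c) (br x y).
Proof.
case: b; case: c => /= -[ux sx] [uy sy]; (split; first by rewrite /Defs.uu tau_br ux uy);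
  by rewrite sig1_br sx sy ?linearNl ?linearNr ?opprK.
Qed.

Lemma grade1_sig2 b x : grade1 b x -> grade1 b (sig2 x).
Proof.
by case: b => -[ux sx]; (split; first by rewrite /Defs.uu Hc2 ux); rewrite Hc12 sx ?linearN.
Qed.

Lemma Ltilde_grade1 xi : Ltilde xi -> forall j, grade1 (odd (absz j)) (xi j).
Proof. by case. Qed.

Lemma Ltilde_graded xi n :
  vanish_above n xi -> (forall j, grade1 (odd (absz j)) (xi j)) -> Ltilde xi.
Proof. by move=> vxi gxi; split; first exists n. Qed.

Lemma Ltilde0 : Ltilde (fun _ => 0).
Proof.
by apply: (@Ltilde_graded _ 0) => // j; exact: real_subspace0 (real_subspace_grade1 _).
Qed.

Lemma LtildeD xi eta : Ltilde xi -> Ltilde eta -> Ltilde (fun j => xi j + eta j).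
Proof.
move=> hxi heta; have [[n vxi] _] := hxi; have [[m veta] _] := heta.
apply: (@Ltilde_graded _ (Order.max n m)) => [j|j].
  by rewrite gt_max => /andP[nj mj]; rewrite vxi // veta // addr0.
by apply: real_subspaceD; [exact: real_subspace_grade1|exact: Ltilde_grade1..].
Qed.

Lemma LtildeB xi eta : Ltilde xi -> Ltilde eta -> Ltilde (fun j => xi j - eta j).
Proof.
move=> hxi heta; have [[n vxi] _] := hxi; have [[m veta] _] := heta.
apply: (@Ltilde_graded _ (Order.max n m)) => [j|j].
  by rewrite gt_max => /andP[nj mj]; rewrite vxi // veta // subr0.
by apply: real_subspaceB; [exact: real_subspace_grade1|exact: Ltilde_grade1..].
Qed.

Lemma LtildeZ (a : C) xi : a \is Num.real -> Ltilde xi -> Ltilde (fun j => a *: xi j).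
Proof.
move=> ra hxi; have [[n vxi] _] := hxi.
apply: (@Ltilde_graded _ n) => [j nj|j]; first by rewrite vxi // scaler0.
by apply: real_subspaceZ; [exact: real_subspace_grade1|done|exact: Ltilde_grade1].
Qed.

Lemma lbrE n m xi eta k (s : seq int) : vanish_above n xi -> vanish_above m eta ->
  uniq s -> (forall i, xi i != 0 -> eta (k - i) != 0 -> i \in s) ->
  lbr n m xi eta k = \sum_(i <- s) br (xi i) (eta (k - i)).
Proof.
move=> vxi veta us supp; rewrite /Defs.lbr.
transitivity (\sum_(t < nat_of_int (n + m - k + 1))
  br (xi (n - t%:Z)) (eta (k - (n - t%:Z)))).
  by apply: eq_bigr => t _; rewrite opprB addrCA addrC.
rewrite (big_ord_down_seq n _ (fun i => br (xi i) (eta (k - i)))).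
have nz_args i : br (xi i) (eta (k - i)) != 0 -> xi i != 0 /\ eta (k - i) != 0.
  by move=> nz; split; apply: contraNneq nz => ->; rewrite ?linear0l ?linear0r.
apply: eq_big_support => // [|i /nz_args[]|i /nz_args[]]; [exact: down_seq_uniq| |exact: supp].
move=> xi_nz eta_nz.
have ni : i <= n by rewrite leNgt; apply: contraNN xi_nz => /vxi ->.
have km : k - i <= m by rewrite leNgt; apply: contraNN eta_nz => /veta ->.
have len : n - i < n + m - k + 1 by rewrite ltzD1 -addrA lerD2l lerBrDl.
by rewrite mem_down_seq ni nat_of_intK // (le_trans _ (ltW len)) // subr_ge0.
Qed.

Lemma vanish_above_lbr n m xi eta : vanish_above (n + m) (lbr n m xi eta).
Proof. by move=> k nmk; rewrite /Defs.lbr nat_of_int_le0 ?big_ord0 // lezD1 subr_lt0. Qed.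

Lemma Ltilde_lbr n m xi eta : Ltilde xi -> Ltilde eta -> Ltilde (lbr n m xi eta).
Proof.
move=> hxi heta; apply: (@Ltilde_graded _ (n + m)); first exact: vanish_above_lbr.
move=> k; apply: real_subspace_sum; first exact: real_subspace_grade1.
move=> t _; move: (t%:Z) => u.
have splitk : k = (n - u) + (k - n + u) by rewrite addrC -addrA [u + _]addrC !subrK.
rewrite {1}splitk odd_absz_add; apply: grade1_br; exact: Ltilde_grade1.
Qed.

Lemma Lminus_subalgebra : loop_subalgebra br tau sig1 Lminus.
Proof.
split.
- by move=> ? [].
- by split; [exact: Ltilde0|done|exact: real_subspace0 real_subspace_kk1'].
- move=> xi eta [hxi pxi kxi] [heta peta keta]; split; first exact: LtildeD.
    by move=> j j0; rewrite pxi // peta // addr0.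
  exact: real_subspaceD real_subspace_kk1' kxi keta.
- move=> a xi ra [hxi pxi kxi]; split; first exact: LtildeZ.
    by move=> j j0; rewrite pxi // scaler0.
  exact: real_subspaceZ real_subspace_kk1' ra kxi.
move=> xi eta n m [hxi pxi kxi] [heta peta keta] vxi veta.
have nonpos i k : xi i != 0 -> eta (k - i) != 0 -> i <= 0 /\ k <= i.
  move=> xi_nz eta_nz; split; first by rewrite leNgt; apply: contraNN xi_nz => /pxi ->.
  by rewrite -subr_le0 leNgt; apply: contraNN eta_nz => /peta ->.
split; first exact: Ltilde_lbr.
- move=> k k0; rewrite (lbrE (s := [::])) ?big_nil // => i /nonpos /[apply] -[i0 ki].
  by move: (le_lt_trans (le_trans ki i0) k0); rewrite ltxx.
rewrite (lbrE (s := [:: 0])) // ?big_seq1 ?subr0; first exact: Hk1'sub.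
by move=> i /nonpos /[apply] -[i0 ki]; rewrite mem_seq1 eq_le i0 ki.
Qed.

Definition sig2_sym (xi : int -> V) : Prop := forall j, xi (- j) = sig2 (xi j).

Lemma sig2_sym_window (xi : int -> V) (N : nat) :
  sig2_sym xi -> vanish_above N%:Z xi -> window_supported N xi.
Proof.
move=> sxi vxi i nz; rewrite mem_window; apply/andP; split; last first.
  by rewrite leNgt; apply: contraNN nz => /vxi ->.
rewrite lerNl leNgt; apply: contraNN nz => /vxi Ni.
by rewrite -(opprK i) sxi Ni linear0.
Qed.

Lemma window_supported_vanish (xi : int -> V) (N : nat) :
  window_supported N xi -> vanish_above N%:Z xi.
Proof.
move=> supp j Nj; apply/eqP; apply: contraTT Nj => /supp.
by rewrite mem_window -leNgt => /andP[].
Qed.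

Lemma eval1_window (xi : int -> V) N : eval1 N xi = \sum_(j <- window N) xi j.
Proof. exact: big_ord_down_seq. Qed.

Lemma eval1D (xi eta : int -> V) N :
  eval1 N (fun j => xi j + eta j) = eval1 N xi + eval1 N eta.
Proof. exact: big_split. Qed.

Lemma eval1Z (a : C) (xi : int -> V) N : eval1 N (fun j => a *: xi j) = a *: eval1 N xi.
Proof. by rewrite /eval1 scaler_sumr. Qed.

Lemma eval1_widen (xi : int -> V) (p N : nat) :
  window_supported p xi -> (p <= N)%N -> eval1 N xi = eval1 p xi.
Proof.
move=> supp pN; rewrite !eval1_window.
by apply: eq_big_support; rewrite ?window_uniq // => j /supp // /(window_le pN).
Qed.

Lemma eval1_sig2 (xi : int -> V) N : sig2_sym xi -> sig2 (eval1 N xi) = eval1 N xi.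
Proof.
move=> sxi; rewrite eval1_window linear_sum.
by rewrite -[RHS]big_windowN; apply: eq_bigr => j _; rewrite sxi.
Qed.

Lemma lbr_window N n m xi eta :
  vanish_above n xi -> vanish_above m eta -> window_supported N xi ->
  forall k, lbr n m xi eta k = \sum_(i <- window N) br (xi i) (eta (k - i)).
Proof. by move=> vxi veta sxi k; apply: lbrE; rewrite ?window_uniq // => i /sxi. Qed.

Lemma lbr_window_supported N n m xi eta :
  vanish_above n xi -> vanish_above m eta ->
  window_supported N xi -> window_supported N eta ->
  window_supported (N + N) (lbr n m xi eta).
Proof.
move=> vxi veta sxi seta k; apply: contraNT => Nk; apply/eqP.
rewrite (lbrE (s := [::])) ?big_nil // => i /sxi iN /seta kiN.
by move: Nk; rewrite -(subrK i k) window_add.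
Qed.

Lemma sig2_sym_lbr N n m xi eta :
  vanish_above n xi -> vanish_above m eta -> window_supported N xi ->
  sig2_sym xi -> sig2_sym eta -> sig2_sym (lbr n m xi eta).
Proof.
move=> vxi veta sxi symxi symeta k; rewrite !(lbr_window vxi veta sxi) linear_sum.
rewrite -big_windowN; apply: eq_bigr => i _ /=.
by rewrite sig2_br -symxi -symeta opprB opprK addrC.
Qed.

Lemma eval1_lbr N n m xi eta :
  vanish_above n xi -> vanish_above m eta ->
  window_supported N xi -> window_supported N eta ->
  eval1 (N + N) (lbr n m xi eta) = br (eval1 N xi) (eval1 N eta).
Proof.
move=> vxi veta sxi seta.
rewrite !eval1_window linear_sumlz.
under eq_bigr do rewrite (lbr_window vxi veta sxi).
rewrite exchange_big /=; apply: eq_bigr => i _; rewrite linear_sumr.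
have [->|xi_nz] := eqVneq (xi i) 0.
  by rewrite !big1 // => *; rewrite linear0l.
have -> : \sum_(j <- window N) br (xi i) (eta j) =
    \sum_(k <- [seq j + i | j <- window N]) br (xi i) (eta (k - i)).
  by rewrite (big_map (fun j => j + i)); apply: eq_big => // j _; rewrite addrK.
apply: eq_big_support; rewrite ?window_uniq //.
- by rewrite map_inj_uniq ?window_uniq // => a b /addIr.
- move=> k nz; rewrite -(subrK i k); apply: window_add; last exact: sxi; apply: seta.
  by apply: contraNneq nz => ->; rewrite linear0r.
- move=> k nz; rewrite -(subrK i k); apply: (map_f (fun j => j + i)); apply: seta.
  by apply: contraNneq nz => ->; rewrite linear0r.
Qed.

Lemma LplusP xi : Lplus xi <->
  [/\ Ltilde xi, sig2_sym xi & exists p : nat, window_supported p xi /\ kk2' (eval1 p xi)].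
Proof.
split=> -[hxi sxi [p [supp k2']]]; split=> //; exists p; split=> //.
- exact: sig2_sym_window.
- exact: window_supported_vanish.
Qed.

Lemma Lplus_subalgebra : loop_subalgebra br tau sig1 Lplus.
Proof.
split.
- by move=> ? [].
- apply/LplusP; split; [exact: Ltilde0|by move=> j; rewrite linear0|].
  exists 0%N; split=> [i|]; first by rewrite eqxx.
  by rewrite /eval1 big1 //; exact: real_subspace0 real_subspace_kk2'.
- move=> xi eta /LplusP[hxi sxi [p [wxi kxi]]] /LplusP[heta seta [q [weta keta]]].
  apply/LplusP; split; [exact: LtildeD|by move=> j; rewrite sxi seta linearD|].
  exists (maxn p q); split.
    apply: window_supportedD; first exact: window_supported_le (leq_maxl p q) wxi.
    exact: window_supported_le (leq_maxr p q) weta.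
  rewrite eval1D (eval1_widen wxi) ?leq_maxl // (eval1_widen weta) ?leq_maxr //.
  exact: real_subspaceD real_subspace_kk2' kxi keta.
- move=> a xi ra /LplusP[hxi sxi [p [wxi kxi]]].
  apply/LplusP; split; [exact: LtildeZ|by move=> j; rewrite sxi linearZ|].
  exists p; split.
    by move=> i nz; apply: wxi; apply: contraNneq nz => ->; rewrite scaler0.
  by rewrite eval1Z; exact: real_subspaceZ real_subspace_kk2' ra kxi.
move=> xi eta n m /LplusP[hxi sxi [p [wxi kxi]]] /LplusP[heta seta [q [weta keta]]] vn vm.
have wxi' := window_supported_le (leq_maxl p q) wxi.
have weta' := window_supported_le (leq_maxr p q) weta.
apply/LplusP; split; [exact: Ltilde_lbr|exact: sig2_sym_lbr vn vm wxi' sxi seta|].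
exists (maxn p q + maxn p q)%N; split; first exact: lbr_window_supported.
rewrite (eval1_lbr vn vm wxi' weta') (eval1_widen wxi) ?leq_maxl //.
by rewrite (eval1_widen weta) ?leq_maxr //; exact: Hk2'sub.
Qed.

Definition sig2_extend (A : int -> V) (x0 : V) (j : int) : V :=
  if 0 < j then A j else if j < 0 then sig2 (A (- j)) else x0.

Lemma sig2_sym_extend A x0 : sig2 x0 = x0 -> sig2_sym (sig2_extend A x0).
Proof.
move=> sx0 j; rewrite /sig2_extend oppr_gt0 oppr_lt0 opprK.
by case: ltgtP => // _; rewrite sig2K.
Qed.

Lemma vanish_above_extend A x0 (N : nat) :
  vanish_above N%:Z A -> vanish_above N%:Z (sig2_extend A x0).
Proof. by move=> vA j Nj; rewrite /sig2_extend (le_lt_trans _ Nj) // vA. Qed.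

Lemma Ltilde_extend A x0 (N : nat) :
  vanish_above N%:Z A -> Ltilde A -> kk1 x0 -> Ltilde (sig2_extend A x0).
Proof.
move=> vA hA kx0; apply: (Ltilde_graded (vanish_above_extend x0 vA)) => j.
rewrite /sig2_extend; case: ltgtP => [j0|j0|<-] //; first exact: Ltilde_grade1.
by apply: grade1_sig2; rewrite -abszN; exact: Ltilde_grade1.
Qed.

Lemma eval1_extend A x0 N :
  eval1 N (sig2_extend A x0) = eval1 N (sig2_extend A 0) + x0.
Proof.
rewrite !eval1_window !(bigD1_seq 0 (mem_window0 N) (window_uniq N)) /=.
rewrite {1 3}/sig2_extend ltxx add0r addrC; congr (_ + _); apply: eq_bigr => j j0.
by rewrite /sig2_extend; case: ltgtP j0.
Qed.

Lemma Lplus_Lminus_decomposition A : Ltilde A ->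
  exists xi eta, Lplus xi /\ Lminus eta /\ forall j, A j = xi j + eta j.
Proof.
move=> hA; have [[n vn] _] := hA; pose N := nat_of_int n.
have vA : vanish_above N%:Z A.
  by move=> j Nj; rewrite vn // (le_lt_trans (nat_of_int_ge n)).
pose c := eval1 N (sig2_extend A 0).
have sym0 := sig2_sym_extend A (linear0 sig2).
have k2c : kk2 c.
  split; last exact: eval1_sig2.
  apply: real_subspace_sum real_subspace_uu _ => t _; apply: grade1_uu.
  exact: Ltilde_grade1 (Ltilde_extend vA hA (real_subspace0 real_subspace_kk1)) _.
have [a1 [b1 [sa1 [k1'b1 A0]]]] := Hk1span (Ltilde_grade1 hA 0).
have [c' [c2 [k2'c' [sc2 cc]]]] := Hk2span k2c.
pose x0 := a1 - c2.
have k1x0 : kk1 x0 by apply: real_subspaceB real_subspace_kk1 (Hs1in sa1).1 (Hs2in sc2).1.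
have sx0 : sig2 x0 = x0 by rewrite /x0 linearB /= (Hs1in sa1).2.2 (Hs2in sc2).2.2.
pose xi := sig2_extend A x0.
have hxi : Ltilde xi := Ltilde_extend vA hA k1x0.
exists xi, (fun j => A j - xi j); split; last split.
- split=> //; first exact: sig2_sym_extend.
  exists N; split; first exact: vanish_above_extend.
  rewrite eval1_extend -/c cc addrACA subrr addr0.
  exact: real_subspaceD real_subspace_kk2' k2'c' (s1_kk2' sa1).
- split; first exact: LtildeB.
    by move=> j j0; rewrite /xi /sig2_extend j0 subrr.
  rewrite /xi /sig2_extend ltxx /=.
  have -> : A 0 - x0 = c2 + b1 by rewrite A0 /x0 opprB addrC addrA subrK.
  exact: real_subspaceD real_subspace_kk1' (s2_kk1' sc2) k1'b1.
- by move=> j; rewrite addrC subrK.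
Qed.

Lemma Lplus_Lminus_trivial xi eta :
  Lplus xi -> Lminus eta -> (forall j, xi j = eta j) -> forall j, xi j = 0.
Proof.
move=> [hxi sxi [p [_ k2'xi]]] [_ peta k1'eta] xi_eta.
have xi_pos j : 0 < j -> xi j = 0 by move=> j0; rewrite xi_eta peta.
have xi_off0 j : j != 0 -> xi j = 0.
  case: (ltgtP j 0) => [j0|j0|->] //= _; last exact: xi_pos.
  by rewrite -[j]opprK sxi xi_pos ?linear0 // oppr_gt0.
have eval_xi : eval1 p xi = xi 0.
  by rewrite eval1_window (bigD1_seq 0 (mem_window0 p) (window_uniq p)) /= big1 ?addr0.
move=> j; have [->|/xi_off0 //] := eqVneq j 0; apply: k12_k12'_eq0.
- exact: Ltilde_grade1 hxi 0.
- by split; [exact: grade1_uu (Ltilde_grade1 hxi 0)|rewrite -sxi oppr0].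
- by rewrite xi_eta.
- by rewrite -eval_xi.
Qed.

Lemma Lplus_Lminus_unique xi xi' eta eta' :
  Lplus xi -> Lplus xi' -> Lminus eta -> Lminus eta' ->
  (forall j, xi j + eta j = xi' j + eta' j) ->
  (forall j, xi j = xi' j) /\ (forall j, eta j = eta' j).
Proof.
move=> hxi hxi' heta heta' e.
have realN1 : (-1 : C) \is Num.real by rewrite realN real1.
have [_ _ plusD plusZ _] := Lplus_subalgebra.
have [_ _ minusD minusZ _] := Lminus_subalgebra.
have dxi := plusD _ _ hxi (plusZ _ _ realN1 hxi').
have deta := minusD _ _ heta' (minusZ _ _ realN1 heta).
have d0 := Lplus_Lminus_trivial dxi deta.
have exi j : xi j = xi' j.
  apply/eqP; rewrite -subr_eq0 -scaleN1r; apply/eqP/d0 => k /=.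
  by rewrite !scaleN1r -[xi k](addrK (eta k)) e [_ + eta' k]addrC addrAC addrK.
by split=> // j; apply: (@addrI _ (xi j)); rewrite e exi.
Qed.

End TwistedLoopAlgebra.

Theorem mainTheorem2 (C : numClosedFieldType) (V : vectType C)
  (br : V -> V -> V) (tau sig1 sig2 : V -> V) (s1 s2 : V -> Prop)
  (Hbr : is_lie_bracket br) (Hsimple : is_simple_lie br)
  (Htau : conj_lin_involution br tau)
  (Hsig1 : lin_involution br sig1) (Hsig2 : lin_involution br sig2)
  (Hc1 : forall x, tau (sig1 x) = sig1 (tau x))
  (Hc2 : forall x, tau (sig2 x) = sig2 (tau x))
  (Hc12 : forall x, sig1 (sig2 x) = sig2 (sig1 x))
  (* K1 /\ K2 = S1 x S2, with S1, S2 ideals *)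
  (Hs1sub : real_subspace s1) (Hs2sub : real_subspace s2)
  (Hs1in : forall x, s1 x -> kk1 tau sig1 x /\ kk2 tau sig2 x)
  (Hs2in : forall x, s2 x -> kk1 tau sig1 x /\ kk2 tau sig2 x)
  (Hs1id : forall x y, kk1 tau sig1 x -> kk2 tau sig2 x -> s1 y -> s1 (br x y))
  (Hs2id : forall x y, kk1 tau sig1 x -> kk2 tau sig2 x -> s2 y -> s2 (br x y))
  (Hk12span : forall x, kk1 tau sig1 x -> kk2 tau sig2 x ->
                exists a b, s1 a /\ s2 b /\ x = a + b)
  (Hk12dir : forall x, s1 x -> s2 x -> x = 0)
  (* k1' and k2' are Lie subalgebras *)
  (Hk1'sub : forall x y, kk1' tau sig1 sig2 s2 x -> kk1' tau sig1 sig2 s2 y ->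
               kk1' tau sig1 sig2 s2 (br x y))
  (Hk2'sub : forall x y, kk2' tau sig1 sig2 s1 x -> kk2' tau sig1 sig2 s1 y ->
               kk2' tau sig1 sig2 s1 (br x y))
  (* k1 = s1 (+) k1' as Lie algebras *)
  (Hk1span : forall x, kk1 tau sig1 x ->
               exists a b, s1 a /\ kk1' tau sig1 sig2 s2 b /\ x = a + b)
  (Hk1dir : forall x, s1 x -> kk1' tau sig1 sig2 s2 x -> x = 0)
  (Hk1comm : forall a b, s1 a -> kk1' tau sig1 sig2 s2 b -> br a b = 0)
  (* k2 = k2' (+) s2 as Lie algebras *)
  (Hk2span : forall x, kk2 tau sig2 x ->
               exists a b, kk2' tau sig1 sig2 s1 a /\ s2 b /\ x = a + b)
  (Hk2dir : forall x, kk2' tau sig1 sig2 s1 x -> s2 x -> x = 0)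
  (Hk2comm : forall a b, kk2' tau sig1 sig2 s1 a -> s2 b -> br a b = 0) :
  loop_subalgebra br tau sig1 (Lplus tau sig1 sig2 s1) /\
  loop_subalgebra br tau sig1 (Lminus tau sig1 sig2 s2) /\
  (forall A, Ltilde tau sig1 A ->
     exists xi eta, Lplus tau sig1 sig2 s1 xi /\ Lminus tau sig1 sig2 s2 eta /\
       forall j, A j = xi j + eta j) /\
  (forall xi xi' eta eta',
     Lplus tau sig1 sig2 s1 xi -> Lplus tau sig1 sig2 s1 xi' ->
     Lminus tau sig1 sig2 s2 eta -> Lminus tau sig1 sig2 s2 eta' ->
     (forall j, xi j + eta j = xi' j + eta' j) ->
     (forall j, xi j = xi' j) /\ (forall j, eta j = eta' j)).
Proof.
split; last split; last split.
- exact: Lplus_subalgebra Hbr Htau Hsig1 Hsig2 Hs1sub Hk2'sub.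
- exact: Lminus_subalgebra Hbr Htau Hsig1 Hsig2 Hs2sub Hk1'sub.
- exact: Lplus_Lminus_decomposition Htau Hsig1 Hsig2 Hc2 Hc12 Hs1sub Hs2sub
    Hs1in Hs2in Hk1span Hk2span.
- exact: Lplus_Lminus_unique Hbr Htau Hsig1 Hsig2 Hs1sub Hs2sub Hk12span Hk1'sub
    Hk2'sub Hk1dir Hk2dir.
Qed.
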